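(* Let $\Omega$ and $Y$ be proper subdomains of $\mathbb{C}$, let $s\in Y$, and suppose $\mathscr{C}_{\Omega}^{Y,s}(z)>0$ for all $z\in\Omega$. Then $\eta_\Omega(w)\geq \mathscr{C}_{\Omega}^{Y,s}(w)$ for every $w\in\Omega$.
   Context: $\mathbb{D}=\{z\in\mathbb{C}:|z|<1\}$. For domains $\Omega\subset\mathbb{C}$, $Y\subsetneq\mathbb{C}$, and points $w\in\Omega$, $s\in Y$, let $\mathcal{H}^s_w(\Omega,Y)$ be the set of holomorphic maps $h:\Omega\to Y$ with $h(w)=s$ and $h(z)\neq s$ for all $z\in\Omega\setminus\{w\}$. For a domain $Y\subsetneq\mathbb{C}$ and $v\in Y$, the Hurwitz density is $\eta_Y(v)=2/r_Y(v)$, where $r_Y(v)=\max\{h'(0): h:\mathbb{D}\to Y \text{ holomorphic},\ h(0)=v,\ h(z)\neq v \text{ for } z\in\mathbb{D}\setminus\{0\},\ h'(0)>0\}$. The Carathéodory density of the Hurwitz metric of $\Omega$ relative to $Y$ is $\mathscr{C}_{\Omega}^{Y,s}(w)=\sup\{\eta_Y(h(w))|h'(w)| : h\in\mathcal{H}^s_w(\Omega,Y)\}$ (defined to be $0$ if the family is empty). *)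

(* Stdlib reals + Coquelicot complex numbers C.
   is_derive over K = C_AbsRing is the complex (holomorphic) derivative. *)
From Stdlib Require Import Reals ClassicalEpsilon.
From Coquelicot Require Import Coquelicot.
Open Scope R_scope.

Definition connected_set (D : C -> Prop) : Prop :=
  forall U V : C -> Prop, open U -> open V ->
    (forall z, D z -> U z \/ V z) ->
    (forall z, D z -> U z -> V z -> False) ->
    (exists z, D z /\ U z) -> (exists z, D z /\ V z) -> False.

Definition domain (D : C -> Prop) : Prop :=
  (exists z, D z) /\ open D /\ connected_set D.

Definition proper_domain (D : C -> Prop) : Prop :=
  domain D /\ exists z, ~ D z.

Definition unit_disc (z : C) : Prop := Cmod z < 1.

Definition holo_into (Om Y : C -> Prop) (h : C -> C) : Prop :=
  (forall z, Om z -> ex_derive h z) /\ (forall z, Om z -> Y (h z)).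

Definition hurwitz_family (Om Y : C -> Prop) (w s : C) (h : C -> C) : Prop :=
  holo_into Om Y h /\ h w = s /\ (forall z, Om z -> z <> w -> h z <> s).

(* r_Y(v) = max { h'(0) : h in H^v_0(D, Y), h'(0) > 0 }; taken as the
   supremum in Rbar (it is a maximum, by the paper). *)
Definition hurwitz_radius (Y : C -> Prop) (v : C) : Rbar :=
  Rbar_lub (fun x : Rbar => exists (h : C -> C) (l : R),
    hurwitz_family unit_disc Y 0 v h /\
    is_derive (h : C_AbsRing -> C_NormedModule) (0 : C) (RtoC l) /\ 0 < l /\ x = Finite l).

(* eta_Y(v) = 2 / r_Y(v) (with 2/+oo = 0; the -oo case never occurs) *)
Definition hurwitz_density (Y : C -> Prop) (v : C) : Rbar :=
  match hurwitz_radius Y v with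
  | Finite r => Finite (2 / r)
  | p_infty => Finite 0
  | m_infty => p_infty
  end.

Definition caratheodory_density (Om Y : C -> Prop) (s w : C) : Rbar :=
  let E := fun x : Rbar => exists (h : C -> C) (l : C),
      hurwitz_family Om Y w s h /\
      is_derive (h : C_AbsRing -> C_NormedModule) w l /\
      x = Rbar_mult (hurwitz_density Y (h w)) (Finite (Cmod l)) in
  if excluded_middle_informative (exists h, hurwitz_family Om Y w s h)
  then Rbar_lub E else Finite 0.

(* If h is in H^s_w(Om, Y) with h'(w) = l <> 0 and g is in H^w_0(D, Om) with
   g'(0) = m > 0, then z |-> h (g (conj l / |l| * z)) is in H^s_0(D, Y) with
   derivative |l| m > 0 at 0.  Hence r_Y(s) >= |l| r_Om(w), i.e.
   eta_Y(s) |l| <= eta_Om(w); taking the supremum over h gives the claim. *)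
From Stdlib Require Import Reals Lra ClassicalEpsilon.
From Coquelicot Require Import Coquelicot.

Lemma Rbar_lub_correct (E : Rbar -> Prop) : Rbar_is_lub E (Rbar_lub E).
Proof. unfold Rbar_lub; destruct (Rbar_ex_lub E); auto. Qed.

(* The composition lemma of Coquelicot wants the inner derivative in the
   normed module [AbsRing_NormedModule C_AbsRing], which carries the same
   structure as [C_NormedModule] but is not convertible to it. *)
Lemma is_derive_C_AbsRing (f : C -> C) (z l : C) :
  @is_derive C_AbsRing C_NormedModule f z l ->
  @is_derive C_AbsRing (AbsRing_NormedModule C_AbsRing) f z l.
Proof.
  intros [[Hplus Hscal [M [HM HbM]]] Hlim]; split.
  - split; [exact Hplus | exact Hscal | now exists M].
  - exact Hlim.
Qed.

Lemma is_derive_Cmult_l (u z : C) :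
  @is_derive C_AbsRing C_NormedModule (fun t => Cmult u t) z u.
Proof.
  pose proof (is_derive_scal_l (K := C_AbsRing) (V := C_NormedModule)
                (fun t => t) z one u (is_derive_id z)) as H.
  match type of H with is_derive _ _ ?k =>
    replace k with u in H by (change (u = Cmult 1 u); ring) end.
  eapply is_derive_ext; [| exact H].
  intros t; change (Cmult t u = Cmult u t); apply Cmult_comm.
Qed.

Lemma hurwitz_family_comp (A B D : C -> Prop) (a b d : C) (g h : C -> C) :
  hurwitz_family A B a b g -> hurwitz_family B D b d h ->
  hurwitz_family A D a d (fun z => h (g z)).
Proof.
  intros [[Hg_der Hg_in] [Hga Hg_ne]] [[Hh_der Hh_in] [Hhb Hh_ne]].
  split; [split|split].
  - intros z Hz.
    destruct (Hg_der z Hz) as [dg Hdg], (Hh_der (g z) (Hg_in z Hz)) as [dh Hdh].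
    eexists; apply (is_derive_comp (K := C_AbsRing) (V := C_NormedModule) h g);
      [exact Hdh | exact (is_derive_C_AbsRing g z dg Hdg)].
  - auto.
  - now rewrite Hga.
  - intros z Hz Hza; apply Hh_ne; auto.
Qed.

Lemma hurwitz_family_rotation (u : C) :
  Cmod u = 1 -> hurwitz_family unit_disc unit_disc 0 0 (fun z => Cmult u z).
Proof.
  intros Hu.
  assert (Hmod : forall z, Cmod (Cmult u z) = Cmod z)
    by (intros z; rewrite Cmod_mult, Hu; ring).
  split; [split|split].
  - intros z _; eexists; apply is_derive_Cmult_l.
  - intros z; unfold unit_disc; now rewrite Hmod.
  - ring.
  - intros z _ Hz0 Huz; apply Hz0, Cmod_eq_0.
    now rewrite <- Hmod, Huz, Cmod_0.
Qed.

Lemma Cmod_unit_conj (l : C) : l <> 0 -> Cmod (Cdiv (Cconj l) (RtoC (Cmod l))) = 1.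
Proof.
  intros Hl; apply Cmod_gt_0 in Hl.
  rewrite Cmod_div, Cmod_conj, Cmod_R, Rabs_pos_eq; [field | ..]; try lra.
  intros E; apply (f_equal fst) in E; simpl in E; lra.
Qed.

Lemma Cmult_unit_conj (l : C) :
  l <> 0 -> Cmult (Cdiv (Cconj l) (RtoC (Cmod l))) l = RtoC (Cmod l).
Proof.
  intros Hl; apply Cmod_gt_0 in Hl; destruct l as [a b].
  assert (Hsq : Cmod (a, b) * Cmod (a, b) = a * a + b * b).
  { unfold Cmod; simpl; rewrite sqrt_sqrt; nra. }
  unfold Cdiv, Cmult, Cinv, Cconj, RtoC; simpl.
  apply injective_projections; simpl; field_simplify; try lra.
  replace (a ^ 2 * Cmod (a, b) + Cmod (a, b) * b ^ 2)
    with (Cmod (a, b) * (Cmod (a, b) * Cmod (a, b))) by (rewrite Hsq; ring).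
  field; lra.
Qed.

Definition normalized_hurwitz_map (Y : C -> Prop) (v : C) (h : C -> C) (l : R) : Prop :=
  hurwitz_family unit_disc Y 0 v h /\
  is_derive (h : C_AbsRing -> C_NormedModule) (0 : C) (RtoC l) /\ 0 < l.

Lemma normalized_hurwitz_map_comp (Om Y : C -> Prop) (w s l : C) (h g : C -> C) (m : R) :
  hurwitz_family Om Y w s h -> is_derive (h : C_AbsRing -> C_NormedModule) w l ->
  l <> 0 -> normalized_hurwitz_map Om w g m ->
  normalized_hurwitz_map Y s
    (fun z => h (g (Cmult (Cdiv (Cconj l) (RtoC (Cmod l))) z))) (Cmod l * m).
Proof.
  intros Hh Hhl Hl [Hg [Hgm Hm]].
  set (u := Cdiv (Cconj l) (RtoC (Cmod l))).
  assert (Hrot := hurwitz_family_rotation u (Cmod_unit_conj l Hl)).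
  assert (Hu0 : Cmult u 0 = 0) by ring.
  assert (Hg0 : g 0 = w) by apply Hg.
  split; [| split].
  - exact (hurwitz_family_comp _ _ _ _ _ _ _ _
             (hurwitz_family_comp _ _ _ _ _ _ _ _ Hrot Hg) Hh).
  - assert (Hg' : @is_derive C_AbsRing (AbsRing_NormedModule C_AbsRing)
                    g (Cmult u 0) (RtoC m))
      by (rewrite Hu0; now apply is_derive_C_AbsRing).
    pose proof (is_derive_comp (K := C_AbsRing) (V := AbsRing_NormedModule C_AbsRing) g
                  (fun z => Cmult u z) (RtoC 0) _ _
                  Hg' (is_derive_C_AbsRing _ _ _ (is_derive_Cmult_l u 0))) as Hgu.
    assert (Hh' : is_derive (h : C_AbsRing -> C_NormedModule) (g (Cmult u 0)) l)
      by now rewrite Hu0, Hg0.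
    pose proof (is_derive_comp (K := C_AbsRing) (V := C_NormedModule) h _ _ _ _ Hh' Hgu)
      as Hc.
    match type of Hc with is_derive _ _ ?k =>
      replace k with (RtoC (Cmod l * m)) in Hc; [exact Hc |] end.
    change (RtoC (Cmod l * m) = Cmult (Cmult u m) l).
    rewrite RtoC_mult, <- (Cmult_unit_conj l Hl); fold u; ring.
  - apply Rmult_lt_0_compat; [now apply Cmod_gt_0 | exact Hm].
Qed.

Lemma hurwitz_radius_ge (Y : C -> Prop) (v : C) (h : C -> C) (l : R) :
  normalized_hurwitz_map Y v h l -> Rbar_le l (hurwitz_radius Y v).
Proof.
  intros [Hh [Hl Hpos]]; apply (Rbar_lub_correct _).
  now exists h, l.
Qed.

Lemma hurwitz_radius_le (Y : C -> Prop) (v : C) (b : Rbar) :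
  (forall h l, normalized_hurwitz_map Y v h l -> Rbar_le l b) ->
  Rbar_le (hurwitz_radius Y v) b.
Proof.
  intros Hb; apply (Rbar_lub_correct _).
  intros x [h [l [Hh [Hl [Hpos ->]]]]].
  now apply (Hb h l).
Qed.

Lemma hurwitz_radius_gt0 (Y : C -> Prop) (v : C) :
  hurwitz_radius Y v <> m_infty -> Rbar_lt 0 (hurwitz_radius Y v).
Proof.
  intros Hr.
  destruct (classic (exists h l, normalized_hurwitz_map Y v h l))
    as [[h [l Hhl]] | Hempty].
  - apply (Rbar_lt_le_trans _ (Finite l));
      [exact (proj2 (proj2 Hhl)) | exact (hurwitz_radius_ge _ _ _ _ Hhl)].
  - exfalso; apply Hr.
    apply Rbar_le_antisym; [| now case (hurwitz_radius Y v)].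
    apply hurwitz_radius_le; intros h l Hhl; exfalso; eauto.
Qed.

Lemma hurwitz_radius_scale_le (Om Y : C -> Prop) (v v' : C) (c : R) :
  0 < c ->
  (forall g m, normalized_hurwitz_map Om v g m -> Rbar_le (c * m) (hurwitz_radius Y v')) ->
  Rbar_le (Rbar_mult c (hurwitz_radius Om v)) (hurwitz_radius Y v').
Proof.
  intros Hc Hcm.
  assert (Hc_m_infty : Rbar_mult c m_infty = m_infty)
    by exact (is_Rbar_mult_unique _ _ _ (is_Rbar_mult_sym _ _ _
                (is_Rbar_mult_m_infty_pos c Hc))).
  destruct (hurwitz_radius Y v') as [ry | |] eqn:Ery.
  - assert (Hle : Rbar_le (hurwitz_radius Om v) (ry / c)).
    { apply hurwitz_radius_le; intros g m Hg; specialize (Hcm g m Hg); simpl in *.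
      apply (Rmult_le_reg_l c); [lra |].
      replace (c * (ry / c)) with ry by (field; lra); exact Hcm. }
    destruct (hurwitz_radius Om v) as [ro | |]; [| contradiction | now rewrite Hc_m_infty].
    simpl in *; apply (Rmult_le_reg_r (/ c)); [now apply Rinv_0_lt_compat |].
    replace (c * ro * / c) with ro by (field; lra); exact Hle.
  - now case (Rbar_mult c (hurwitz_radius Om v)).
  - assert (Hle : Rbar_le (hurwitz_radius Om v) m_infty)
      by (apply hurwitz_radius_le; intros g m Hg; exact (Hcm g m Hg)).
    destruct (hurwitz_radius Om v); try contradiction.
    now rewrite Hc_m_infty.
Qed.

Lemma hurwitz_density_ge0 (Y : C -> Prop) (v : C) : Rbar_le 0 (hurwitz_density Y v).
Proof.
  pose proof (hurwitz_radius_gt0 Y v) as Hpos.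
  unfold hurwitz_density; destruct (hurwitz_radius Y v) as [r | |]; simpl in *.
  - apply Rlt_le, Rdiv_lt_0_compat; [lra |]; apply Hpos; discriminate.
  - lra.
  - trivial.
Qed.

Lemma hurwitz_density_scale_le (Om Y : C -> Prop) (v v' : C) (c : R) :
  0 < c -> Rbar_le (Rbar_mult c (hurwitz_radius Om v)) (hurwitz_radius Y v') ->
  Rbar_le (Rbar_mult (hurwitz_density Y v') c) (hurwitz_density Om v).
Proof.
  intros Hc Hle; pose proof (hurwitz_radius_gt0 Om v) as Hpos.
  assert (Hc_p_infty : Rbar_mult c p_infty = p_infty)
    by exact (is_Rbar_mult_unique _ _ _ (is_Rbar_mult_sym _ _ _
                (is_Rbar_mult_p_infty_pos c Hc))).
  unfold hurwitz_density.
  destruct (hurwitz_radius Om v) as [ro | |], (hurwitz_radius Y v') as [ry | |];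
    try (match goal with |- Rbar_le ?x p_infty => now case x end);
    try rewrite Hc_p_infty in Hle; simpl in Hle |- *; try contradiction; try lra.
  - assert (Hro : 0 < ro) by (apply Hpos; discriminate).
    assert (Hry : 0 < ry) by nra.
    apply (Rmult_le_reg_r (ry * ro)); [nra |].
    field_simplify; nra.
  - assert (Hro : 0 < ro) by (apply Hpos; discriminate).
    rewrite Rmult_0_l; apply Rlt_le, Rdiv_lt_0_compat; lra.
Qed.

Theorem proposition3p8 (Om Y : C -> Prop) (s : C) :
  proper_domain Om -> proper_domain Y -> Y s ->
  (forall z, Om z -> Rbar_lt (Finite 0) (caratheodory_density Om Y s z)) ->
  forall w, Om w -> Rbar_le (caratheodory_density Om Y s w) (hurwitz_density Om w).
Proof.
  intros _ _ _ _ w _.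
  unfold caratheodory_density.
  destruct (excluded_middle_informative _) as [_ | _]; [| apply hurwitz_density_ge0].
  apply (Rbar_lub_correct _); intros x [h [l [Hh [Hhl ->]]]].
  rewrite (proj1 (proj2 Hh)).
  destruct (Ceq_dec l 0) as [-> | Hl].
  - rewrite Cmod_0, Rbar_mult_0_r; apply hurwitz_density_ge0.
  - apply hurwitz_density_scale_le; [now apply Cmod_gt_0 |].
    apply hurwitz_radius_scale_le; [now apply Cmod_gt_0 |].
    intros g m Hg.
    exact (hurwitz_radius_ge _ _ _ _
             (normalized_hurwitz_map_comp _ _ _ _ _ _ _ _ Hh Hhl Hl Hg)).
Qed.
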